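(* Let $k$ be a positive integer and let $(C,F)$ be a finite simple undirected graph with $|C|=k$, equipped with edge weights $w:F\to\mathbb{R}$. Suppose that: (C1) $(C,F)$ is connected; (C2) for every partition of $C$ into two disjoint sets $S,T$ (a cut), the cut weight $w(S,T)=\sum_{\{i,j\}\in F,\ i\in S,\ j\in T} w_{ij}$ is non-negative; (C3) for all distinct $i,j,k\in C$, if $\{i,j\}\in F$, $\{j,k\}\in F$ and $\{i,k\}\notin F$, then $w_{ij}+w_{jk}<0$. Then $(C,F)$ is complete, i.e. $\{i,j\}\in F$ for all distinct $i,j\in C$.
   Context: $w_{ij}$ denotes $w(\{i,j\})$ for an edge $\{i,j\}\in F$. *)

From HB Require Import structures.
From mathcomp Require Import all_boot all_order all_algebra.
Set Implicit Arguments. Unset Strict Implicit. Unset Printing Implicit Defensive.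
Import Order.TTheory GRing.Theory Num.Theory.
Local Open Scope ring_scope.

(* A finite simple undirected graph on vertex set C: symmetric, irreflexive
   adjacency relation e; the edge set F is {{i,j} | e i j}. *)
Definition simple_graph (C : finType) (e : rel C) : Prop :=
  symmetric e /\ irreflexive e.

Definition connected_graph (C : finType) (e : rel C) : Prop :=
  forall x y : C, connect e x y.

Definition cut_weight (R : numDomainType) (C : finType) (e : rel C)
    (w : {set C} -> R) (S : {set C}) : R :=
  \sum_(i in S) \sum_(j in ~: S | e i j) w [set i; j].

Definition complete_graph (C : finType) (e : rel C) : Prop :=
  forall i j : C, i != j -> e i j.

From HB Require Import structures.
From mathcomp Require Import all_boot all_order all_algebra.
Import Order.TTheory GRing.Theory Num.Theory.
Local Open Scope ring_scope.

(* If the graph is connected but not complete, it contains an induced path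
   z - i - j.  The cut around the closed neighbourhood of a vertex z is crossed
   exactly by the edges {i, j} of the induced paths z - i - j, so summing (C2)
   over z shows that these edges have nonnegative total weight over all induced
   paths.  Reversing the paths, the same holds for the edges {z, i}; hence
   w_zi + w_ij, which is negative by (C3), has a nonnegative sum over a
   nonempty set of induced paths. *)

Definition induced_path {C : finType} (e : rel C) (z i j : C) : bool :=
  [&& e z i, e i j, j != z & ~~ e z j].

Definition closed_nbhd {C : finType} (e : rel C) (z : C) : {set C} :=
  [set x | (x == z) || e z x].

Lemma induced_path_rev {C : finType} (e : rel C) (z i j : C) :
  symmetric e -> induced_path e z i j = induced_path e j i z.
Proof.
move=> e_sym; rewrite /induced_path (e_sym i z) (e_sym j i) (e_sym j z).
by rewrite (eq_sym z j); case: (e i j); case: (e z i).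
Qed.

Lemma induced_path_free_connected_complete {C : finType} (e : rel C) :
  symmetric e -> connected_graph e ->
  (forall z i j, ~~ induced_path e z i j) -> complete_graph e.
Proof.
move=> e_sym e_conn P3_free a b neq_ab.
have nbhd_step x y :
    e x y -> x \in closed_nbhd e a -> y \in closed_nbhd e a.
  rewrite !inE => exy /orP[/eqP eq_xa | eax]; first by rewrite -eq_xa exy orbT.
  case: eqVneq => //= neq_ya; apply: contraNT (P3_free a x y) => neay.
  by rewrite /induced_path eax exy neq_ya.
have nbhd_closed : closed e (closed_nbhd e a).
  by move=> x y exy; apply/idP/idP; apply: nbhd_step; rewrite // e_sym.
have := closed_connect nbhd_closed (e_conn a b).
by rewrite !inE eqxx eq_sym (negbTE neq_ab).
Qed.

Lemma cut_weight_closed_nbhd {R : numDomainType} {C : finType} (e : rel C)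
    (w : {set C} -> R) (z : C) :
  cut_weight e w (closed_nbhd e z) =
    \sum_i \sum_(j | induced_path e z i j) w [set i; j].
Proof.
rewrite /cut_weight big_mkcond; apply: eq_bigr => i _ /=.
rewrite inE /induced_path; case: eqVneq => [-> | _] /=.
  apply: eq_bigl => j; rewrite !inE.
  by case: (e z j); rewrite ?orbT ?andbF.
case: (e z i) => /=; last by rewrite big_pred0.
by apply: eq_bigl => j; rewrite !inE negb_or andbC andbA.
Qed.

Lemma big3_rev {V : nmodType} {I : finType} (P : I -> I -> I -> bool)
    (F : I -> I -> I -> V) :
  \sum_x \sum_y \sum_(z | P x y z) F x y z =
    \sum_x \sum_y \sum_(z | P z y x) F z y x.
Proof.
under eq_bigr do under eq_bigr do rewrite big_mkcond.
under [RHS]eq_bigr do under eq_bigr do rewrite big_mkcond.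
under [RHS]eq_bigr do rewrite exchange_big.
by rewrite [RHS]exchange_big; under [RHS]eq_bigr do rewrite exchange_big.
Qed.

Lemma sum_induced_path_weight_ge0 {R : numDomainType} {C : finType}
    (e : rel C) (w : {set C} -> R) :
  symmetric e -> (forall S : {set C}, 0 <= cut_weight e w S) ->
  0 <= \sum_z \sum_i \sum_(j | induced_path e z i j)
         (w [set z; i] + w [set i; j]).
Proof.
move=> e_sym cut_ge0.
under eq_bigr do under eq_bigr do rewrite big_split.
under eq_bigr do rewrite big_split.
rewrite big_split big3_rev /=.
under eq_bigr do under eq_bigr do
  under eq_bigl do rewrite -induced_path_rev //.
under [X in X + _]eq_bigr do under eq_bigr do
  under eq_bigr do rewrite setUC.
under eq_bigr do rewrite -cut_weight_closed_nbhd.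
by rewrite addr_ge0 // sumr_ge0.
Qed.

Lemma sumr_lt0 {R : numDomainType} {I : finType} {P : pred I} {F : I -> R}
    (i0 : I) :
  P i0 -> (forall i, P i -> F i <= 0) -> F i0 < 0 -> \sum_(i | P i) F i < 0.
Proof.
move=> Pi0 F_le0 Fi0_lt0; rewrite (bigD1 i0) //=.
by apply: ltr_wnDr Fi0_lt0; apply: sumr_le0 => i /andP[Pi _]; apply: F_le0.
Qed.

Lemma sum3_lt0 {R : numDomainType} {I : finType} {P : I -> I -> I -> bool}
    {F : I -> I -> I -> R} {x0 y0 z0 : I} :
  P x0 y0 z0 -> (forall x y z, P x y z -> F x y z < 0) ->
  \sum_x \sum_y \sum_(z | P x y z) F x y z < 0.
Proof.
move=> P0 F_lt0.
have F_le0 x y z : P x y z -> F x y z <= 0 by move/F_lt0/ltW.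
have inner_le0 x y : \sum_(z | P x y z) F x y z <= 0.
  by apply: sumr_le0 => z; apply: F_le0.
apply: (sumr_lt0 x0) => //; first by move=> x _; apply: sumr_le0.
apply: (sumr_lt0 y0) => //.
by apply: (sumr_lt0 z0) => //; [apply: F_le0 | apply: F_lt0].
Qed.

Theorem proposition1 (R : realFieldType) (k : nat) (C : finType) (e : rel C)
    (w : {set C} -> R) :
  (0 < k)%N -> #|C| = k -> simple_graph e ->
  (* (C1) *) connected_graph e ->
  (* (C2) *) (forall S : {set C}, 0 <= cut_weight e w S) ->
  (* (C3) *) (forall i j l : C, i != j -> j != l -> i != l ->
                e i j -> e j l -> ~~ e i l ->
                w [set i; j] + w [set j; l] < 0) ->
  complete_graph e.
Proof.
move=> _ _ [e_sym e_irr] e_conn cut_ge0 path_lt0.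
apply: induced_path_free_connected_complete => // z i j.
apply/negP => P_zij.
have := sum_induced_path_weight_ge0 e w e_sym cut_ge0.
rewrite leNgt => /negP; apply.
apply: (sum3_lt0 P_zij) => {P_zij}z {}i {}j /and4P[ezi eij neq_jz n_ezj].
have neq_zi : z != i by apply: contraTneq ezi => ->; rewrite e_irr.
have neq_ij : i != j by apply: contraTneq eij => ->; rewrite e_irr.
by apply: path_lt0; rewrite // eq_sym.
Qed.
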